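(* Let $h:\mathbb{R}^d\to\mathbb{R}$ be convex, and let $\mathcal{S}=\{x:h(x)\le0\}$ be nonempty. Let $\mathcal{K}$ be a convex set with $\mathcal{S}\subseteq\mathcal{K}$. Assume there are $G,\sigma>0$ such that: - for all $x\in\mathcal{K}$ and all $s\in\partial h(x)$, $\|s\|\le G$; - whenever $x\in\mathcal{K}$ and $h(x)=0$, $\|s\|\ge\sigma$ for all $s\in\partial h(x)$. Let $x\in\mathcal{K}$ with $h(x)>0$, let $z=\Pi_{\mathcal{S}}(x)$, and let $s_x\in\partial h(x)$. Then there exist $\gamma\ge0$ and $s_z\in\partial h(z)$ such that: 1. $h(z)=0$; 2. $x-z=\gamma\frac{s_z}{\|s_z\|}$; 3. $\gamma\le\frac{h(x)}{\|s_z\|}$; 4. $\|s_z\|^2\le s_x^\top s_z$; 5. $\|s_x\|\ge\|s_z\|$.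
   Context: $\|\cdot\|$ is the Euclidean norm, $\Pi_{\mathcal{S}}$ is the Euclidean projection onto the closed convex set $\mathcal{S}$, and $\partial h(x)$ is the subdifferential of $h$ at $x$. *)

From HB Require Import structures.
From mathcomp Require Import all_boot all_order all_algebra.
From mathcomp Require Import reals.
Set Implicit Arguments. Unset Strict Implicit. Unset Printing Implicit Defensive.
Import Order.TTheory GRing.Theory Num.Theory.
Local Open Scope ring_scope.

Definition dotv {R : realType} {d : nat} (u v : 'rV[R]_d) : R :=
  \sum_(i < d) u ord0 i * v ord0 i.

Definition enorm {R : realType} {d : nat} (u : 'rV[R]_d) : R :=
  Num.sqrt (dotv u u).

Definition convex_fun {R : realType} {d : nat} (h : 'rV[R]_d -> R) : Prop :=
  forall (x y : 'rV[R]_d) (t : R), 0 <= t -> t <= 1 ->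
    h (t *: x + (1 - t) *: y) <= t * h x + (1 - t) * h y.

Definition convex_set {R : realType} {d : nat} (K : 'rV[R]_d -> Prop) : Prop :=
  forall (x y : 'rV[R]_d) (t : R), K x -> K y -> 0 <= t -> t <= 1 ->
    K (t *: x + (1 - t) *: y).

Definition subgrad {R : realType} {d : nat} (h : 'rV[R]_d -> R)
    (x s : 'rV[R]_d) : Prop :=
  forall y : 'rV[R]_d, h x + dotv s (y - x) <= h y.

Definition is_proj {R : realType} {d : nat} (S : 'rV[R]_d -> Prop)
    (x z : 'rV[R]_d) : Prop :=
  S z /\ forall y : 'rV[R]_d, S y -> enorm (x - z) <= enorm (x - y).

From HB Require Import structures.
From mathcomp Require Import all_boot all_order all_algebra.
From mathcomp Require Import classical_sets reals.
From mathcomp Require Import ring lra.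
Set Implicit Arguments. Unset Strict Implicit. Unset Printing Implicit Defensive.

Import Order.TTheory GRing.Theory Num.Theory.
Local Open Scope ring_scope.

(* The projection [z] of [x] onto the sublevel set [S = {h <= 0}] satisfies
   the variational inequality <x - z, y - z> <= 0 on [S], and [h z = 0]
   because otherwise points of the segment [z, x] near [z] would lie in [S]
   and be closer to [x].  So the affine map l y := <x - z, y - z> is <= 0 on
   [S]; for a convex [h] this yields a multiplier [c] with c l(y) <= h(y) for
   all [y], i.e. a subgradient c (x - z) of [h] at [z].  The hypothesis on
   [sigma] rules out [c <= 0], and the remaining claims follow from the
   subgradient inequalities at [x] and [z] evaluated at each other. *)

Section InnerProduct.
Context {R : realType} {d : nat}.
Implicit Types (u v w : 'rV[R]_d) (a : R).

Lemma dotvC u v : dotv u v = dotv v u.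
Proof. by rewrite /dotv; apply: eq_bigr => i _; rewrite mulrC. Qed.

Lemma dotvDl u v w : dotv (u + v) w = dotv u w + dotv v w.
Proof. by rewrite /dotv -big_split; apply: eq_bigr => i _; rewrite !mxE mulrDl. Qed.

Lemma dotvZl a u v : dotv (a *: u) v = a * dotv u v.
Proof. by rewrite /dotv mulr_sumr; apply: eq_bigr => i _; rewrite !mxE mulrA. Qed.

Lemma dotvBl u v w : dotv (u - v) w = dotv u w - dotv v w.
Proof. by rewrite dotvDl -scaleN1r dotvZl mulN1r. Qed.

Lemma dotvDr u v w : dotv w (u + v) = dotv w u + dotv w v.
Proof. by rewrite dotvC dotvDl !(dotvC w). Qed.

Lemma dotvZr a u v : dotv v (a *: u) = a * dotv v u.
Proof. by rewrite dotvC dotvZl dotvC. Qed.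

Lemma dotvNr u v : dotv v (- u) = - dotv v u.
Proof. by rewrite -scaleN1r dotvZr mulN1r. Qed.

Lemma dotvBr u v w : dotv w (u - v) = dotv w u - dotv w v.
Proof. by rewrite dotvDr dotvNr. Qed.

Lemma dotv0l v : dotv 0 v = 0.
Proof. by rewrite -(scale0r 0) dotvZl mul0r. Qed.

Lemma dotvv_ge0 u : 0 <= dotv u u.
Proof. by apply: sumr_ge0 => i _; rewrite -expr2 sqr_ge0. Qed.

Lemma dotvv_eq0 u : (dotv u u == 0) = (u == 0).
Proof.
apply/idP/eqP => [|->]; last by rewrite dotv0l.
rewrite psumr_eq0 => [/allP u0|i _]; last by rewrite -expr2 sqr_ge0.
apply/rowP => i; have /implyP/(_ isT) := u0 i (mem_index_enum _).
by rewrite mulf_eq0 orbb !mxE => /eqP.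
Qed.

Lemma dotvv_gt0 u : (0 < dotv u u) = (u != 0).
Proof. by rewrite lt_def dotvv_ge0 dotvv_eq0 andbT. Qed.

Lemma enorm_sqr u : enorm u ^+ 2 = dotv u u.
Proof. by rewrite sqr_sqrtr // dotvv_ge0. Qed.

Lemma enorm_gt0 u : (0 < enorm u) = (u != 0).
Proof. by rewrite sqrtr_gt0 dotvv_gt0. Qed.

Lemma enorm0 : enorm (0 : 'rV[R]_d) = 0.
Proof. by rewrite /enorm dotv0l sqrtr0. Qed.

Lemma enormZ a u : 0 <= a -> enorm (a *: u) = a * enorm u.
Proof.
move=> a0; rewrite /enorm dotvZl dotvZr mulrA -expr2.
by rewrite sqrtrM ?sqr_ge0 // sqrtr_sqr ger0_norm.
Qed.

Lemma enorm_le u v : (enorm u <= enorm v) = (dotv u u <= dotv v v).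
Proof. by rewrite ler_sqrt // dotvv_ge0. Qed.

(* A weak form of Cauchy-Schwarz: expand 0 <= |u - v|^2. *)
Lemma enorm_le_of_dotv u v : enorm v ^+ 2 <= dotv u v -> enorm v <= enorm u.
Proof.
rewrite enorm_sqr enorm_le => uv; have := dotvv_ge0 (u - v).
by rewrite dotvBl !dotvBr (dotvC v u); lra.
Qed.

End InnerProduct.

Lemma le0_of_forall_le_mul (R : realFieldType) (a b : R) :
  (forall t, 0 < t -> t <= 1 -> a <= t * b) -> a <= 0.
Proof.
move=> le_ab; rewrite leNgt; apply/negP => a_gt0.
have [b_le0|b_gt0] := lerP b 0; first by have := le_ab 1 ltr01 (lexx 1); lra.
have ab_gt0 : 0 < a + b by lra.
have := le_ab (a / (a + b)); rewrite divr_gt0 // ler_pdivrMr // mul1r.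
rewrite mulrAC ler_pdivlMr //; nra.
Qed.

Section ConvexSublevel.
Context {R : realType} {d : nat}.
Implicit Types (h : 'rV[R]_d -> R) (S : 'rV[R]_d -> Prop) (x y z : 'rV[R]_d).

Lemma convex_sublevel h : convex_fun h -> convex_set (fun y => h y <= 0).
Proof.
move=> hconv y y' t hy hy' t0 t1; apply: le_trans (hconv y y' t t0 t1) _.
by rewrite -oppr_ge0 opprD; apply: addr_ge0; rewrite -mulrN mulr_ge0 ?subr_ge0 ?oppr_ge0.
Qed.

Lemma segment_subr x y z t :
  t *: x + (1 - t) *: y - z = t *: (x - z) + (1 - t) *: (y - z).
Proof. by apply/rowP => i; rewrite !mxE; ring. Qed.

(* First-order optimality of the projection: only the moves towards [y]
   along the segment [z, y] are tested, and [t -> 0] kills the quadratic term. *)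
Lemma proj_normal S x z y :
  convex_set S -> is_proj S x z -> S y -> dotv (x - z) (y - z) <= 0.
Proof.
move=> Sconv [Sz zmin] Sy; rewrite -(@pmulr_rle0 _ 2) //.
apply: (@le0_of_forall_le_mul _ _ (dotv (y - z) (y - z))) => t t0 t1.
have := zmin _ (Sconv y z t Sy Sz (ltW t0) t1).
have -> : x - (t *: y + (1 - t) *: z) = (x - z) - t *: (y - z).
  by apply/rowP => i; rewrite !mxE; ring.
move: (x - z) (y - z) => n m.
rewrite enorm_le dotvBl !dotvBr !dotvZl !dotvZr (dotvC m) => le_t.
by rewrite -(ler_pM2l t0); nra.
Qed.

Lemma proj_sublevel_eq0 h x z :
  convex_fun h -> is_proj (fun y => h y <= 0) x z -> 0 < h x -> h z = 0.
Proof.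
move=> hconv zproj hx; have [hz _] := zproj.
apply/eqP; rewrite eq_le hz /= leNgt; apply/negP => hz_lt0.
have xz : x - z != 0 by rewrite subr_eq0; apply: contraTneq hx => ->; lra.
pose t := - h z / (h x - h z).
have t0 : 0 < t by rewrite divr_gt0 //; lra.
have t1 : t <= 1 by rewrite ler_pdivrMr; lra.
have : h (t *: x + (1 - t) *: z) <= 0.
  apply: le_trans (hconv x z t (ltW t0) t1) _.
  suff -> : t * h x + (1 - t) * h z = 0 by [].
  by rewrite /t; field; lra.
move/(proj_normal (convex_sublevel hconv) zproj).
rewrite segment_subr subrr scaler0 addr0 dotvZr pmulr_rle0 //.
by rewrite leNgt dotvv_gt0 xz.
Qed.

End ConvexSublevel.

Section Multiplier.
Context {R : realType} {d : nat}.
Variables (h l : 'rV[R]_d -> R).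
Hypothesis hconv : convex_fun h.
Hypothesis l_affine : forall y y' t,
  l (t *: y + (1 - t) *: y') = t * l y + (1 - t) * l y'.
Hypothesis l_sublevel : forall y, h y <= 0 -> l y <= 0.

(* On the segment [y, y'], [h > 0] wherever [l > 0]; letting the point tend to
   the zero of [l] makes the chord of [h] there nonnegative. *)
Lemma multiplier_cross y y' : l y <= 0 -> 0 < l y' -> l y * h y' <= h y * l y'.
Proof.
move=> ly ly'; have ba : 0 < l y' - l y by lra.
pose lam0 := l y' / (l y' - l y).
suff : 0 <= h y' + lam0 * (h y - h y').
  rewrite -(pmulr_rge0 _ ba).
  suff -> : (l y' - l y) * (h y' + lam0 * (h y - h y')) = h y * l y' - l y * h y'.
    by rewrite subr_ge0.
  by rewrite /lam0; field; lra.
rewrite -oppr_le0; apply: (le0_of_forall_le_mul (b := - (lam0 * (h y - h y')))).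
move=> t t0 t1; pose lam := lam0 * (1 - t).
have lam0_ge0 : 0 <= lam0 by rewrite divr_ge0 // ltW.
have lam_ge0 : 0 <= lam by rewrite mulr_ge0 // subr_ge0.
have lam_le1 : lam <= 1.
  by rewrite /lam /lam0 mulrAC ler_pdivrMr // mul1r; nra.
have : 0 < h (lam *: y + (1 - lam) *: y').
  rewrite ltNge; apply/negP => /l_sublevel; rewrite l_affine.
  suff -> : lam * l y + (1 - lam) * l y' = t * l y' by rewrite pmulr_rle0 // leNgt ly'.
  by rewrite /lam /lam0; field; lra.
move/lt_le_trans/(_ (hconv y y' lam_ge0 lam_le1)).
by rewrite /lam; lra.
Qed.

Lemma multiplier_ratio_le y y' :
  l y < 0 -> 0 < l y' -> h y / l y <= h y' / l y'.
Proof.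
move=> ly ly'; rewrite ler_pdivlMr // mulrAC ler_ndivrMr //.
by rewrite mulrC multiplier_cross ?ltW.
Qed.

(* The multiplier is the supremum of the ratios [h y / l y] over [l y < 0];
   the ratios over [l y > 0] bound it from above. *)
Lemma exists_multiplier :
  (exists y, l y < 0) -> (exists y, 0 < l y) -> exists c, forall y, c * l y <= h y.
Proof.
move=> [y0 ly0] [y1 ly1].
pose A : set R := fun r => exists2 y, l y < 0 & r = h y / l y.
have A0 : A (h y0 / l y0) by exists y0.
have A_ub y' : 0 < l y' -> ubound A (h y' / l y').
  by move=> ly' r [y ly ->]; exact: multiplier_ratio_le.
exists (sup A) => y; have [ly|ly|ly] := ltgtP (l y) 0.
- rewrite -ler_ndivrMr //; apply: sup_upper_bound; last by exists y.
  by split; [exists (h y0 / l y0) | exists (h y1 / l y1); exact: A_ub].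
- by rewrite -ler_pdivlMr //; apply: ge_sup; [exists (h y0 / l y0) | exact: A_ub].
- have := multiplier_cross (y := y) _ ly1.
  by rewrite ly lexx mul0r mulr0 pmulr_lge0 //; apply.
Qed.

Lemma nonpos_multiplier_ge0 c :
  c <= 0 -> (forall y, c * l y <= h y) -> forall y, 0 <= h y.
Proof.
move=> c_le0 c_sub y; have := c_sub y; have [ly|ly] := leP (l y) 0; first nra.
by move=> _; rewrite leNgt; apply: contraTN ly => /ltW/l_sublevel; rewrite leNgt.
Qed.

End Multiplier.

Theorem lemma3 (R : realType) (d : nat) (h : 'rV[R]_d -> R)
  (K : 'rV[R]_d -> Prop) (G sigma : R)
  (hconv : convex_fun h)
  (Sne : exists x0 : 'rV[R]_d, h x0 <= 0)
  (Kconv : convex_set K)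
  (SK : forall y : 'rV[R]_d, h y <= 0 -> K y)
  (Gpos : 0 < G) (sigmapos : 0 < sigma)
  (Gbound : forall y s : 'rV[R]_d, K y -> subgrad h y s -> enorm s <= G)
  (sigmabound : forall y s : 'rV[R]_d, K y -> h y = 0 -> subgrad h y s ->
                  sigma <= enorm s)
  (x z sx : 'rV[R]_d)
  (xK : K x) (hxpos : 0 < h x)
  (zproj : is_proj (fun y => h y <= 0) x z)
  (sxsub : subgrad h x sx) :
  exists (gamma : R) (sz : 'rV[R]_d),
    0 <= gamma /\ subgrad h z sz /\
    [/\ h z = 0,
        x - z = gamma *: ((enorm sz)^-1 *: sz),
        gamma <= h x / enorm sz,
        enorm sz ^+ 2 <= dotv sx sz
      & enorm sz <= enorm sx].
Proof.
have hz0 : h z = 0 := proj_sublevel_eq0 hconv zproj hxpos.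
have normal y : h y <= 0 -> dotv (x - z) (y - z) <= 0.
  exact: proj_normal (convex_sublevel hconv) zproj.
set n := x - z in normal *.
have n_neq0 : n != 0 by rewrite subr_eq0; apply: contraTneq hxpos => ->; lra.
have [c c_sub] : exists c, forall y, c * dotv n (y - z) <= h y.
  apply: (exists_multiplier hconv _ normal).
  - by move=> y y' t /=; rewrite segment_subr [LHS]dotvDr !dotvZr.
  - by exists (z - n); rewrite /= addrAC subrr add0r dotvNr oppr_lt0 dotvv_gt0.
  - by exists x; rewrite dotvv_gt0.
have sz_sub : subgrad h z (c *: n) by move=> y; rewrite hz0 add0r dotvZl.
have c_gt0 : 0 < c.
  rewrite ltNge; apply/negP => c_le0.
  suff /(sigmabound _ _ (SK _ (proj1 zproj)) hz0) : subgrad h z 0.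
    by rewrite enorm0; lra.
  move=> y; rewrite hz0 dotv0l addr0.
  exact: (nonpos_multiplier_ge0 (l := fun y => dotv n (y - z)) normal c_le0 c_sub).
have hx_ge : c * dotv n n <= h x := c_sub x.
have sx_n : h x <= dotv sx n.
  by have := sxsub z; rewrite hz0 -opprB dotvNr; lra.
have sz_sqr : enorm (c *: n) ^+ 2 <= dotv sx (c *: n).
  by rewrite enorm_sqr dotvZl !dotvZr; nra.
have n_gt0 : 0 < enorm n by rewrite enorm_gt0.
exists (enorm n), (c *: n); split; first exact: ltW.
split=> //; split=> //; last exact: enorm_le_of_dotv.
- rewrite (enormZ _ (ltW c_gt0)) !scalerA.
  suff -> : enorm n * (c * enorm n)^-1 * c = 1 by rewrite scale1r.
  by field; rewrite !gt_eqF.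
- rewrite (enormZ _ (ltW c_gt0)) ler_pdivlMr ?mulr_gt0 //.
  by rewrite mulrCA -expr2 enorm_sqr.
Qed.
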